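(* Let $p$ be a prime number and let $a$ be an integer not divisible by $p$. Then for every positive integer $n$, $$\vartheta_p\left(\sum_{k=1}^{n}\left(\frac{1}{a^k}+\frac{1}{(p-a)^k}\right)\frac{p^k}{k}\right) \geq (n+1) - \log_p\left(\frac{n+1}{2}\right).$$ Moreover, this inequality is an equality if and only if $n = 2p^{\alpha}-1$ for some non-negative integer $\alpha$.
   Context: For a prime $p$ and a nonzero rational $r$, $\vartheta_p(r)$ denotes the $p$-adic valuation of $r$. For a positive real $x$, $\log_p(x) = \frac{\log x}{\log p}$ is the logarithm to base $p$. *)

From HB Require Import structures.
From mathcomp Require Import all_boot all_order all_algebra.
From mathcomp Require Import all_classical all_reals all_analysis.
Set Implicit Arguments. Unset Strict Implicit. Unset Printing Implicit Defensive.
Import Order.TTheory GRing.Theory Num.Theory.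
Local Open Scope ring_scope.

(** p-adic valuation of a nonzero rational r = numq r / denq r
    (denq r > 0, coprime): logn p |numq r| - logn p (denq r).
    Only meaningful for r != 0; the statement guards with r != 0. *)
Definition vp (p : nat) (r : rat) : int :=
  (logn p `|numq r|%N)%:Z - (logn p `|denq r|%N)%:Z.

Definition logb {R : realType} (p : nat) (x : R) : R := ln x / ln (p%:R).

Definition Ssum (p : nat) (a : int) (n : nat) : rat :=
  \sum_(1 <= k < n.+1)
     ((a%:~R ^- k + (p%:Z - a)%:~R ^- k) * (p%:R ^+ k) / k%:R).

From HB Require Import structures.
From mathcomp Require Import all_boot all_order all_algebra.
From mathcomp Require Import all_classical all_reals all_analysis.
From mathcomp Require Import zify ring lra.
Set Implicit Arguments. Unset Strict Implicit. Unset Printing Implicit Defensive.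
Import Order.TTheory GRing.Theory Num.Theory.
Local Open Scope ring_scope.

(* Put x = p / a and y = p / (p - a).  Then x + y = x y = t := p^2 / (a (p - a)),
   so every power sum x^k + y^k is a polynomial in t, and
   S_n = sum_(m = 1 .. n) (-1)^(n - m) C(m - 1, n - m) t^m / m.
   Only the terms with 2m > n survive; such a term has p-adic valuation at least
   2m - v_p(m) >= n + 1 - log_p((n + 1) / 2), with equality only if 2m = n + 1
   and m is a power of p.  For n = 2 p^alpha - 1 the term m = p^alpha has
   coefficient +-1 and valuation strictly below all the others, so it alone
   determines v_p(S_n). *)

Lemma pfactor_logn_leq p m : (0 < m)%N -> (p ^ logn p m <= m)%N.
Proof. by move=> m_gt0; apply: dvdn_leq m_gt0 (pfactor_dvdnn p m). Qed.

Lemma leq_sub_trunc_log_half p n m : (1 < p)%N -> (n.+1 <= 2 * m)%N ->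
  (n.+1 - trunc_log p n.+1./2 <= 2 * m - logn p m)%N.
Proof.
move=> p_gt1 le_nm; set l := logn p m; set d := (2 * m - n.+1)%N.
have m_gt0 : (0 < m)%N by lia.
have pl_le : (p ^ l <= m)%N := pfactor_logn_leq p m_gt0.
have l_lt := ltn_expl l p_gt1.
have [le_ld | lt_dl] := leqP l d; first lia.
suff : (l - d <= trunc_log p n.+1./2)%N by lia.
apply: trunc_log_max => //; rewrite -leq_double -!mul2n.
have d_lt := ltn_expl d p_gt1.
have pl : (p ^ l = p ^ (l - d) * p ^ d)%N by rewrite -expnD subnK // ltnW.
(* 2 p^l <= 2 m = n + 1 + d <= (n + 1) p^d *)
have : (2 * p ^ (l - d) <= n.+1)%N by nia.
have := odd_double_half n.+1; lia.
Qed.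

Lemma double_trunc_log_half_leq p m : (1 < p)%N -> (1 < m)%N ->
  (2 * p ^ trunc_log p m./2 <= m)%N.
Proof.
move=> p_gt1 m_gt1; have half_pos : (0 < m./2)%N by rewrite half_gt0.
have := trunc_logP p_gt1 half_pos; have := odd_double_half m.
by case: (odd m) => /=; lia.
Qed.

Lemma double_pfactor_sub_logn_lt p al m : (1 < p)%N -> (p ^ al < m)%N ->
  (2 * p ^ al - al < 2 * m - logn p m)%N.
Proof.
move=> p_gt1 lt_m; set l := logn p m.
have pl_le : (p ^ l <= m)%N by apply: pfactor_logn_leq; lia.
have al_lt := ltn_expl al p_gt1.
have [le_l | lt_l] := leqP l al; first lia.
have e_lt := ltn_expl (l - al) p_gt1.
have pl : (p ^ l = p ^ al * p ^ (l - al))%N by rewrite -expnD subnKC // ltnW.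
have : (0 < p ^ al)%N by rewrite expn_gt0; lia.
nia.
Qed.

Section Logb.
Variables (R : realType) (p : nat).
Hypothesis p_gt1 : (1 < p)%N.

Let ln_p_gt0 : 0 < ln (p%:R : R).
Proof. by apply: ln_gt0; rewrite ltr1n. Qed.

Let ln_natrX k : ln (p%:R ^+ k : R) = k%:R * ln (p%:R : R).
Proof. by rewrite lnXn ?mulr_natl // ltr0n; lia. Qed.

Lemma natr_le_logb k (x : R) : 0 < x -> (k%:R <= logb p x) = (p%:R ^+ k <= x).
Proof.
move=> x_gt0; rewrite /logb ler_pdivlMr // -ln_natrX ler_ln // posrE.
by rewrite exprn_gt0 // ltr0n; lia.
Qed.

Lemma logb_eq_natr k (x : R) : 0 < x -> (logb p x == k%:R) = (x == p%:R ^+ k).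
Proof.
move=> x_gt0; have ln_p_neq0 := lt0r_neq0 ln_p_gt0.
rewrite /logb -(inj_eq (mulIf ln_p_neq0)) divfK // -ln_natrX.
apply/eqP/eqP => [|-> //]; apply: ln_inj; rewrite // posrE exprn_gt0 // ltr0n; lia.
Qed.

Lemma natr_sub_logb_half_le n k : (2 * p ^ k <= n.+1)%N ->
  n.+1%:R - logb p (n.+1%:R / 2 : R) <= (n.+1 - k)%:R.
Proof.
move=> le_pk; have k_le : (k <= n.+1)%N by have := ltn_expl k p_gt1; lia.
rewrite natrB // lerD2l lerN2 natr_le_logb ?divr_gt0 ?ltr0n //.
by rewrite ler_pdivlMr // -natrX -natrM ler_nat mulnC.
Qed.

Lemma natr_sub_logb_half_eq n k : (2 * p ^ k <= n.+1)%N ->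
  (n.+1%:R - logb p (n.+1%:R / 2 : R) == (n.+1 - k)%:R) = (n.+1 == 2 * p ^ k)%N.
Proof.
move=> le_pk; have k_le : (k <= n.+1)%N by have := ltn_expl k p_gt1; lia.
rewrite natrB // (inj_eq (addrI _)) eqr_opp logb_eq_natr ?divr_gt0 ?ltr0n //.
have two_neq0 : (2 : R) != 0 by rewrite pnatr_eq0.
by rewrite -(inj_eq (mulIf two_neq0)) divfK // -natrX -natrM eqr_nat mulnC.
Qed.

End Logb.

Section PowerSums.
Variable R : comRingType.

(* When x + y = x y = t, [hsum t k] is h_k(x, y) = sum_(i <= k) x^i y^(k - i). *)
Definition hsum (t : R) k :=
  \sum_(j < k.+1) (-1) ^+ j * 'C(k - j, j)%:R * t ^+ (k - j).

Lemma hsum0 t : hsum t 0 = 1.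
Proof. by rewrite /hsum big_ord1 mul1r expr0 mulr1. Qed.

Lemma hsum1 t : hsum t 1 = t.
Proof.
by rewrite /hsum big_ord_recr big_ord1 /= !expr0 bin0 subnn bin0n mulr0 mul0r addr0 !mul1r.
Qed.

Lemma hsumSS t k : hsum t k.+2 = t * hsum t k.+1 - t * hsum t k.
Proof.
rewrite /hsum big_ord_recl big_ord_recr /= [in t * _ - _]big_ord_recl /=.
rewrite subn0 bin0 subnn bin0n mulr0 mul0r addr0 expr0 mul1r.
rewrite mulrDr !mulr_sumr -addrA -sumrB exprS; congr (_ + _).
  by rewrite subn0 !mul1r.
apply: eq_bigr => i _; have i_lt := ltn_ord i.
have -> : (k.+2 - bump 0 i = (k - i).+1)%N by rewrite /bump; lia.
have -> : (k.+1 - bump 0 i = k - i)%N by rewrite /bump; lia.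
rewrite binS natrD /bump add1n !exprS; ring.
Qed.

Lemma eq_linear_rec2 (f g : nat -> R) (a b : R) :
  (forall n, f n.+2 = a * f n.+1 + b * f n) ->
  (forall n, g n.+2 = a * g n.+1 + b * g n) ->
  f 0%N = g 0%N -> f 1%N = g 1%N -> f =1 g.
Proof.
move=> f_rec g_rec fg0 fg1 n.
suff : f n = g n /\ f n.+1 = g n.+1 by case.
by elim: n => [|n [IHn IHn1]] //; rewrite f_rec g_rec IHn IHn1.
Qed.

Lemma exprD_hsum x y n : x + y = x * y ->
  x ^+ n.+1 + y ^+ n.+1 = 2 * hsum (x * y) n.+1 - x * y * hsum (x * y) n.
Proof.
move=> xy_eq; set t := x * y.
apply: (@eq_linear_rec2 (fun n => x ^+ n.+1 + y ^+ n.+1)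
  (fun n => 2 * hsum t n.+1 - t * hsum t n) t (- t)) => {n} [n|n||] /=.
- transitivity ((x + y) * (x ^+ n.+2 + y ^+ n.+2) - t * (x ^+ n.+1 + y ^+ n.+1)).
    by rewrite /t !exprS; ring.
  by rewrite xy_eq -/t; ring.
- by rewrite !hsumSS; ring.
- by rewrite hsum1 hsum0 !expr1 xy_eq -/t; ring.
- rewrite hsumSS hsum1 hsum0.
  transitivity ((x + y) ^+ 2 - 2 * t); first by rewrite /t; ring.
  by rewrite xy_eq -/t; ring.
Qed.

End PowerSums.

(* The coefficient of t^m / m in S_n, i.e. sum_(j <= n - m) (-1)^j C(m, j). *)
Definition tcoef (n m : nat) : int := (-1) ^+ (n - m) * 'C(m.-1, n - m)%:R.

Lemma tcoef_eq0 n m : (0 < m)%N -> (2 * m <= n)%N -> tcoef n m = 0.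
Proof. by move=> m_gt0 le_mn; rewrite /tcoef bin_small ?mulr0 //; lia. Qed.

Lemma tcoef_edge m : (0 < m)%N -> tcoef (2 * m).-1 m = (-1) ^+ m.-1.
Proof.
move=> m_gt0; rewrite /tcoef; have -> : ((2 * m).-1 - m = m.-1)%N by lia.
by rewrite binn mulr1.
Qed.

Section LogSums.
Variable F : numFieldType.

Definition dsum (t : F) k :=
  \sum_(j < k) (-1) ^+ j * 'C(k - j, j)%:R * t ^+ (k - j) / (k - j)%:R.

Definition tsum (t : F) n :=
  \sum_(i < n) (tcoef n i.+1)%:~R * t ^+ i.+1 / i.+1%:R.

Lemma natr_mul_dsum t k : k.+1%:R * dsum t k.+1 = 2 * hsum t k.+1 - t * hsum t k.
Proof.
rewrite /dsum /hsum (big_ord_recr k.+1) /= subnn bin0n mulr0 mul0r addr0.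
rewrite mulr_sumr [2 * _]mulr_sumr [t * _]mulr_sumr -sumrB; apply: eq_bigr => j _.
have j_le : (j <= k)%N by rewrite -ltnS.
have -> : (k.+1 - j = (k - j).+1)%N by lia.
set m := (k - j)%N.
have bin_eq : ((m.+1 + j) * 'C(m.+1, j) + m.+1 * 'C(m, j) = 2 * m.+1 * 'C(m.+1, j))%N.
  have [le_jm | lt_mj] := leqP j m.+1; last by rewrite !bin_small //; lia.
  by rewrite mul_bin_down; nia.
have m_neq0 : (m.+1%:R : F) != 0 by rewrite pnatr_eq0.
have binF : ((m.+1 + j)%:R * 'C(m.+1, j)%:R : F) =
    2 * m.+1%:R * 'C(m.+1, j)%:R - m.+1%:R * 'C(m, j)%:R.
  by rewrite -!natrM -bin_eq natrD addrK.
have -> : ('C(m, j)%:R : F) =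
    (2 * m.+1%:R * 'C(m.+1, j)%:R - (m.+1 + j)%:R * 'C(m.+1, j)%:R) / m.+1%:R.
  by rewrite binF; field.
have -> : (k.+1%:R : F) = (m.+1 + j)%:R by congr _%:R; lia.
by rewrite exprS; field; rewrite nat1r.
Qed.

Lemma exprD_div_dsum x y k : x + y = x * y ->
  (x ^+ k.+1 + y ^+ k.+1) / k.+1%:R = dsum (x * y) k.+1.
Proof.
by move=> xy_eq; rewrite exprD_hsum // -natr_mul_dsum mulrC mulKf.
Qed.

Lemma tsumS t n : tsum t n.+1 = tsum t n + dsum t n.+1.
Proof.
rewrite /tsum /tcoef /dsum [X in _ = _ + X](reindex_inj rev_ord_inj) /=.
under eq_bigr do rewrite rmorphM rmorphXn rmorphN1 rmorph_nat.
under [in RHS]eq_bigr do rewrite rmorphM rmorphXn rmorphN1 rmorph_nat.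
rewrite !big_ord_recr /=.
rewrite addrA -big_split /= subnn subn0 !bin0; congr (_ + _).
apply: eq_bigr => i _; have i_lt := ltn_ord i.
have -> : (n.+1 - (n.+1 - i.+1) = i.+1)%N by lia.
have -> : (n.+1 - i.+1 = (n - i.+1).+1)%N by lia.
rewrite binS natrD exprS; ring.
Qed.

Lemma sum_exprD_div x y n : x + y = x * y ->
  \sum_(1 <= k < n.+1) (x ^+ k + y ^+ k) / k%:R = tsum (x * y) n.
Proof.
move=> xy_eq; elim: n => [|n IHn]; first by rewrite big_geq // /tsum big_ord0.
by rewrite big_nat_recr //= IHn tsumS exprD_div_dsum.
Qed.

End LogSums.

Section PAdicValuation.
Variable p : nat.
Hypothesis p_pr : prime p.

Let p_gt0 : (0 < p)%N. Proof. exact: prime_gt0. Qed.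
Let p_neq0 : (p%:R : rat) != 0. Proof. by rewrite pnatr_eq0 -lt0n. Qed.

Lemma ndvdz_neq0 (u : int) : ~~ (p%:Z %| u)%Z -> u != 0.
Proof. by apply: contraNneq => ->; rewrite dvdz0. Qed.

Lemma ndvdzM (u w : int) :
  ~~ (p%:Z %| u)%Z -> ~~ (p%:Z %| w)%Z -> ~~ (p%:Z %| u * w)%Z.
Proof. by rewrite !dvdzE abszM Euclid_dvdM // => /negbTE-> /negbTE->. Qed.

Lemma ndvdzX (u : int) k : ~~ (p%:Z %| u)%Z -> ~~ (p%:Z %| u ^+ k)%Z.
Proof. by rewrite !dvdzE abszX Euclid_dvdX // => /negbTE->. Qed.

Lemma ndvdz_coprime (m : nat) : coprime p m -> ~~ (p%:Z %| m%:Z)%Z.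
Proof. by rewrite dvdzE prime_coprime. Qed.

Lemma logn_ndvdz (u : int) : ~~ (p%:Z %| u)%Z -> logn p `|u| = 0%N.
Proof. by move=> pNu; rewrite logn_coprime // prime_coprime. Qed.

Lemma logn_pfactorMz e (u : int) : u != 0 ->
  logn p `|p%:Z ^+ e * u| = (e + logn p `|u|)%N.
Proof.
by move=> u_neq0; rewrite abszM abszX lognM ?pfactorK ?expn_gt0 ?p_gt0 ?absz_gt0.
Qed.

Lemma vp_ratio (U W : int) : U != 0 -> W != 0 ->
  vp p (U%:~R / W%:~R) = (logn p `|U|)%:Z - (logn p `|W|)%:Z.
Proof.
move=> U_neq0 W_neq0; set x := U%:~R / W%:~R.
have x_neq0 : x != 0 by rewrite mulf_neq0 ?invr_eq0 ?intr_eq0.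
have : numq x * W = U * denq x.
  apply: (@intr_inj rat); rewrite !intrM; apply/eqP.
  by rewrite -eqr_div ?intr_eq0 ?denq_neq0 // divq_num_den.
move=> /(congr1 (logn p \o absz)) /=.
rewrite !abszM !lognM ?absz_gt0 ?numq_eq0 ?denq_neq0 // /vp; lia.
Qed.

Lemma vp_pfactor e (u w : int) : u != 0 -> ~~ (p%:Z %| w)%Z ->
  vp p (p%:R ^+ e * u%:~R / w%:~R) = (e + logn p `|u|)%N.
Proof.
move=> u_neq0 pNw; have := vp_ratio (U := p%:Z ^+ e * u) _ (ndvdz_neq0 pNw).
rewrite rmorphM rmorphXn /= => ->; last by rewrite mulf_neq0 // expf_neq0 // -lt0n.
by rewrite logn_pfactorMz // (logn_ndvdz pNw) subr0.
Qed.

(* v_p(x) >= c, where x = 0 is allowed. *)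
Definition pval_ge (c : nat) (x : rat) :=
  exists u w : int, ~~ (p%:Z %| w)%Z /\ x = p%:R ^+ c * u%:~R / w%:~R.

Lemma pval_ge0 c : pval_ge c 0.
Proof.
exists 0, 1; rewrite mulr0 mul0r; split => //.
by rewrite dvdzE dvdn1; have := prime_gt1 p_pr; lia.
Qed.

Lemma pval_geD c x y : pval_ge c x -> pval_ge c y -> pval_ge c (x + y).
Proof.
move=> [u1 [w1 [pNw1 ->]]] [u2 [w2 [pNw2 ->]]].
exists (u1 * w2 + u2 * w1), (w1 * w2); split; first exact: ndvdzM.
by rewrite rmorphD !rmorphM /=; field; rewrite !intr_eq0 !ndvdz_neq0.
Qed.

Lemma pval_ge_sum c (I : Type) (r : seq I) (P : pred I) (F : I -> rat) :
  (forall i, P i -> pval_ge c (F i)) -> pval_ge c (\sum_(i <- r | P i) F i).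
Proof. by move=> F_ge; apply: big_ind; [exact: pval_ge0 | exact: pval_geD |]. Qed.

Lemma pval_ge_leq c c' x : (c' <= c)%N -> pval_ge c x -> pval_ge c' x.
Proof.
move=> le_c [u [w [pNw ->]]]; exists (p%:Z ^+ (c - c') * u), w; split => //.
by rewrite rmorphM rmorphXn mulrA -exprD subnKC.
Qed.

Lemma vp_ge x c : x != 0 -> pval_ge c x -> c%:Z <= vp p x.
Proof.
move=> x_neq0 [u [w [pNw x_eq]]].
have u_neq0 : u != 0 by apply: contra_neq x_neq0 => u0; rewrite x_eq u0 mulr0 mul0r.
by rewrite x_eq vp_pfactor // lez_nat leq_addr.
Qed.

Lemma vp_addr_pval_gt e (u w : int) y :
  ~~ (p%:Z %| u)%Z -> ~~ (p%:Z %| w)%Z -> pval_ge e.+1 y ->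
  p%:R ^+ e * u%:~R / w%:~R + y != 0 /\ vp p (p%:R ^+ e * u%:~R / w%:~R + y) = e.
Proof.
move=> pNu pNw [u' [w' [pNw' ->]]]; set z := _ + _.
have pNu'' : ~~ (p%:Z %| u * w' + p%:Z * u' * w)%Z.
  apply: contra (ndvdzM pNu pNw') => p_dvd_sum.
  by rewrite -(addrK (p%:Z * u' * w) (u * w')) rpredB // -mulrA dvdz_mulr.
have z_eq : z = p%:R ^+ e * (u * w' + p%:Z * u' * w)%:~R / (w * w')%:~R.
  rewrite /z !rmorphD !rmorphM /= exprS; field.
  by rewrite !intr_eq0 !ndvdz_neq0.
rewrite z_eq vp_pfactor ?ndvdz_neq0 ?ndvdzM // logn_ndvdz // addn0; split => //.
by rewrite !mulf_neq0 ?expf_neq0 ?invr_eq0 ?intr_eq0 ?ndvdz_neq0 ?ndvdzM.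
Qed.

Lemma pfactor_expr_div (w0 : int) m : ~~ (p%:Z %| w0)%Z -> (0 < m)%N ->
  exists w : int, ~~ (p%:Z %| w)%Z /\
    (p%:R ^+ 2 / w0%:~R) ^+ m / m%:R = p%:R ^+ (2 * m - logn p m) / w%:~R :> rat.
Proof.
move=> pNw0 m_gt0; have [m' p_co_m' m_eq] := pfactor_coprime p_pr m_gt0.
have l_lt_m : (logn p m < m)%N.
  by have := ltn_expl (logn p m) (prime_gt1 p_pr); have := pfactor_logn_leq p m_gt0; lia.
exists (w0 ^+ m * m'%:Z); split.
  exact: ndvdzM (ndvdzX _ pNw0) (ndvdz_coprime p_co_m').
rewrite {2}m_eq natrM natrX rmorphM rmorphXn /= -pmulrn expr_div_n -exprM.
rewrite -[in LHS](subnK (_ : logn p m <= 2 * m)%N) ?exprD; last lia.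
field.
have m'_gt0 : (0 < m')%N by move: m_gt0; rewrite m_eq muln_gt0 => /andP[].
by rewrite pnatr_eq0 -lt0n m'_gt0 !expf_neq0 ?intr_eq0 ?ndvdz_neq0.
Qed.

End PAdicValuation.

Lemma pval_ge_term p (w0 c : int) m : prime p -> ~~ (p%:Z %| w0)%Z -> (0 < m)%N ->
  pval_ge p (2 * m - logn p m) (c%:~R * (p%:R ^+ 2 / w0%:~R) ^+ m / m%:R).
Proof.
move=> p_pr pNw0 m_gt0; have [w [pNw term_eq]] := pfactor_expr_div p_pr pNw0 m_gt0.
by exists c, w; split; rewrite // -mulrA term_eq mulrCA mulrA.
Qed.

Lemma Ssum_tsum p a n : a != 0 -> p%:Z - a != 0 ->
  Ssum p a n = tsum (p%:R ^+ 2 / (a * (p%:Z - a))%:~R) n.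
Proof.
move=> a_neq0 b_neq0; set b := p%:Z - a in b_neq0 *.
set x : rat := p%:R / a%:~R; set y : rat := p%:R / b%:~R.
have b_eq : b%:~R = p%:R - a%:~R :> rat by rewrite rmorphB.
have xy_eq : x + y = x * y.
  by rewrite /x /y b_eq; field; rewrite -b_eq !intr_eq0 a_neq0 b_neq0.
have -> : p%:R ^+ 2 / (a * b)%:~R = x * y
  by rewrite /x /y rmorphM; field; rewrite !intr_eq0 a_neq0 b_neq0.
rewrite -sum_exprD_div //; apply: eq_bigr => k _.
by rewrite /x /y !expr_div_n mulrDl [_^-1 * _]mulrC [X in _ + X]mulrC.
Qed.

Lemma tsum_pval_ge p (w0 : int) n : prime p -> ~~ (p%:Z %| w0)%Z ->
  pval_ge p (n.+1 - trunc_log p n.+1./2) (tsum (p%:R ^+ 2 / w0%:~R) n).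
Proof.
move=> p_pr pNw0; apply: (pval_ge_sum p_pr) => i _.
have [le_in | lt_ni] := leqP (2 * i.+1) n.
  by rewrite tcoef_eq0 // rmorph0 !mul0r; exact: pval_ge0.
apply: pval_ge_leq (pval_ge_term _ p_pr pNw0 (ltn0Sn i)).
exact: leq_sub_trunc_log_half (prime_gt1 p_pr) lt_ni.
Qed.

Lemma vp_tsum_double_pfactor p (w0 : int) al : prime p -> ~~ (p%:Z %| w0)%Z ->
  let S := tsum (p%:R ^+ 2 / w0%:~R) (2 * p ^ al).-1 in
  S != 0 /\ vp p S = (2 * p ^ al - al)%N.
Proof.
move=> p_pr pNw0 S; set m := (p ^ al)%N; set n := (2 * m).-1.
have m_gt0 : (0 < m)%N by rewrite expn_gt0 prime_gt0.
have lt_m_n : (m.-1 < n)%N by lia.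
pose i0 := Ordinal lt_m_n; pose t : rat := p%:R ^+ 2 / w0%:~R.
have [w [pNw term_eq]] := pfactor_expr_div p_pr pNw0 m_gt0.
have head_eq : (tcoef n i0.+1)%:~R * t ^+ i0.+1 / i0.+1%:R =
    p%:R ^+ (2 * m - al) * ((-1) ^+ m.-1)%:~R / w%:~R.
  by rewrite /= prednK // tcoef_edge // -mulrA term_eq pfactorK // mulrCA mulrA.
have pNsign : ~~ (p%:Z %| (-1) ^+ m.-1)%Z.
  by rewrite dvdzE abszX /= exp1n dvdn1; have := prime_gt1 p_pr; lia.
have rest_ge : pval_ge p (2 * m - al).+1
    (\sum_(i < n | i != i0) (tcoef n i.+1)%:~R * t ^+ i.+1 / i.+1%:R).
  apply: (pval_ge_sum p_pr) => i ne_i0.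
  have [le_in | lt_ni] := leqP (2 * i.+1) n.
    by rewrite tcoef_eq0 // rmorph0 !mul0r; exact: pval_ge0.
  apply: pval_ge_leq (pval_ge_term _ p_pr pNw0 (ltn0Sn i)).
  apply: double_pfactor_sub_logn_lt; first exact: prime_gt1.
  by move: ne_i0; rewrite -(inj_eq val_inj) /= -/m; lia.
rewrite /S -/m -/n /tsum (bigD1 i0) //= -/t head_eq.
exact (vp_addr_pval_gt p_pr pNsign pNw rest_ge).
Qed.

Theorem theorem1 (R : realType) (p : nat) (a : int) :
  prime p -> ~~ (p%:Z %| a)%Z ->
  forall n : nat, (0 < n)%N ->
    (Ssum p a n != 0 ->
       (n.+1%:R - logb p (n.+1%:R / 2 : R) <= (vp p (Ssum p a n))%:~R))
    /\
    ((Ssum p a n != 0 /\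
        (vp p (Ssum p a n))%:~R = n.+1%:R - logb p (n.+1%:R / 2 : R))
     <-> exists alpha : nat, n = (2 * p ^ alpha).-1).
Proof.
move=> p_pr pNa n n_gt0; have p_gt1 := prime_gt1 p_pr.
have pNb : ~~ (p%:Z %| p%:Z - a)%Z.
  by apply: contra pNa => p_dvd_b; rewrite -[a](subKr p%:Z) rpredB ?dvdzz.
have S_eq := Ssum_tsum n (ndvdz_neq0 pNa) (ndvdz_neq0 pNb).
set k := trunc_log p n.+1./2.
have pk_le : (2 * p ^ k <= n.+1)%N by apply: double_trunc_log_half_leq.
have vp_S_ge : Ssum p a n != 0 -> (n.+1 - k)%:R <= (vp p (Ssum p a n))%:~R :> R.
  move=> S_neq0; rewrite pmulrn ler_int; apply: (vp_ge p_pr S_neq0).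
  by rewrite S_eq; apply: tsum_pval_ge; rewrite ?ndvdzM.
split.
  by move=> S_neq0; apply: le_trans (natr_sub_logb_half_le R p_gt1 pk_le) (vp_S_ge S_neq0).
split.
  case=> S_neq0 vp_S_eq; exists k.
  have : n.+1%:R - logb p (n.+1%:R / 2 : R) == (n.+1 - k)%:R.
    by rewrite eq_le natr_sub_logb_half_le //= -vp_S_eq vp_S_ge.
  by rewrite natr_sub_logb_half_eq // => /eqP <-.
case=> al n_eq; have n1_eq : n.+1 = (2 * p ^ al)%N.
  by rewrite n_eq prednK // muln_gt0 expn_gt0 (prime_gt0 p_pr).
have [S_neq0 ->] : Ssum p a n != 0 /\ vp p (Ssum p a n) = (2 * p ^ al - al)%N.
  by rewrite S_eq n_eq; apply: vp_tsum_double_pfactor; rewrite ?ndvdzM.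
have /eqP -> : n.+1%:R - logb p (n.+1%:R / 2 : R) == (n.+1 - al)%:R.
  by rewrite natr_sub_logb_half_eq ?n1_eq //; apply/eqP.
by split; rewrite // n1_eq -pmulrn.
Qed.
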